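(* Let $\Gamma=\bigcup_i\gamma_i$ be an admissible finite collection of transverse unobstructed curves in $\Sigma$. Then every nonzero $b\in H_{\mathbb{R}}$ has both a positive and a negative coordinate in the canonical basis of $C$.
   Context: $\Sigma$ is a closed oriented surface of genus at least two; unobstructed curves are oriented immersed closed curves whose lifts to the universal cover are properly embedded lines. $C=C_2(\Sigma;\mathbb{Z})$ is the free $\mathbb{Z}$-module with basis the connected components of $\Sigma\setminus\Gamma$. The Euler measure $e(S)$ of a surface $S$ with corners is $\frac{1}{2\pi}$ times the integral of the curvature of a metric on $S$ for which the boundary is geodesic and the corners are right angles; it is additive under gluing along boundary segments, and extends to a linear form $e$ on $C$. $H\subset C$ is the subgroup of $2$-chains in $\ker e$ whose boundary is a linear combination of the curves $\gamma_i$, and $H_{\mathbb{R}}$ is its $\mathbb{R}$-span in $C_2(\Sigma;\mathbb{R})=C\otimes\mathbb{R}$. The collection $\Gamma$ is admissible iff every nonzero $b\in H$ has both positive and negative coordinates in the canonical basis of $C$. *)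

From HB Require Import structures.
From mathcomp Require Import all_boot all_order all_algebra.
From mathcomp Require Import reals.
Set Implicit Arguments. Unset Strict Implicit. Unset Printing Implicit Defensive.
Import Order.TTheory GRing.Theory Num.Theory.
Local Open Scope ring_scope.

(* Combinatorial data of a finite collection Gamma = U_i gamma_i of transverse
   curves in Sigma:
   - the connected components (regions) of Sigma \ Gamma, indexed by 'I_nreg;
     C = C_2(Sigma;Z) = 'rV[int]_nreg (canonical basis = regions);
   - the edges of the graph Gamma, indexed by 'I_nedge; C_1 = 'rV[int]_nedge;
   - bdry : the cellular boundary map C -> C_1, as a matrix (row j = boundary
     of region j);
   - curve i : the curve gamma_i as a 1-chain (sum of its oriented edges);
   - the Euler measure of region j is chi j - corners j / 4, where chi j is its
     Euler characteristic and corners j its number of (right-angle) corners. *)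
Record curve_data := CurveData {
  nreg : nat;
  nedge : nat;
  ncurve : nat;
  bdry : 'M[int]_(nreg, nedge);
  curve : 'I_ncurve -> 'rV[int]_nedge;
  chi : 'I_nreg -> int;
  corners : 'I_nreg -> nat
}.

Definition euler_region (G : curve_data) (j : 'I_(nreg G)) : rat :=
  (chi j)%:~R - (corners j)%:R / 4%:R.

Definition euler (G : curve_data) (b : 'rV[int]_(nreg G)) : rat :=
  \sum_j (b 0 j)%:~R * euler_region j.

Definition bd (G : curve_data) (b : 'rV[int]_(nreg G)) : 'rV[int]_(nedge G) :=
  b *m bdry G.

Definition inH (G : curve_data) (b : 'rV[int]_(nreg G)) : Prop :=
  euler b = 0 /\ exists c : 'I_(ncurve G) -> int, bd b = \sum_i c i *: curve i.

Definition admissible (G : curve_data) : Prop :=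
  forall b : 'rV[int]_(nreg G), inH b -> b != 0 ->
    (exists j, 0 < b 0 j) /\ (exists j, b 0 j < 0).

Definition inH_R (R : realType) (G : curve_data) (x : 'rV[R]_(nreg G)) : Prop :=
  exists (p : nat) (bs : 'I_p -> 'rV[int]_(nreg G)) (r : 'I_p -> R),
    (forall l, inH (bs l)) /\ x = \sum_l r l *: map_mx (fun z : int => z%:~R) (bs l).

From HB Require Import structures.
From mathcomp Require Import all_boot all_order all_algebra.
From mathcomp Require Import reals.
From mathcomp Require Import lra.

Set Implicit Arguments.
Unset Strict Implicit.
Unset Printing Implicit Defensive.

Import Order.TTheory GRing.Theory Num.Theory.
Local Open Scope ring_scope.

(* If a nonzero x in H_R had no negative coordinate, consider the rational
   vectors of the Q-span of H that vanish wherever x does.  They are cut out by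
   rational linear equations, so x is a real combination of them, and by
   density of Q in R one of them is close enough to x to have the same sign
   pattern.  Clearing its denominators yields a nonzero b in H with no negative
   coordinate, contradicting admissibility.  Applied to -x, the same argument
   gives a positive coordinate. *)

Section IntegralClosure.

Variable G : curve_data.

Lemma inH0 : inH (0 : 'rV[int]_(nreg G)).
Proof.
split; first by rewrite /euler big1 // => j _; rewrite mxE mul0r.
by exists (fun _ => 0); rewrite /bd mul0mx big1 // => i _; rewrite scale0r.
Qed.

Lemma inHD (a b : 'rV[int]_(nreg G)) : inH a -> inH b -> inH (a + b).
Proof.
move=> [ea [ca Ha]] [eb [cb Hb]]; split.
  rewrite /euler (eq_bigr (fun j => (a 0 j)%:~R * euler_region j
                                    + (b 0 j)%:~R * euler_region j)).
    by rewrite big_split /= -/(euler a) -/(euler b) ea eb addr0.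
  by move=> j _; rewrite mxE intrD mulrDl.
exists (fun i => ca i + cb i).
rewrite /bd mulmxDl -/(bd a) -/(bd b) Ha Hb -big_split /=.
by apply: eq_bigr => i _; rewrite scalerDl.
Qed.

Lemma inHZ (c : int) (a : 'rV[int]_(nreg G)) : inH a -> inH (c *: a).
Proof.
move=> [ea [ca Ha]]; split.
  rewrite /euler (eq_bigr (fun j => c%:~R * ((a 0 j)%:~R * euler_region j))).
    by rewrite -mulr_sumr -/(euler a) ea mulr0.
  by move=> j _; rewrite mxE intrM mulrA.
exists (fun i => c * ca i); rewrite /bd -scalemxAl -/(bd a) Ha scaler_sumr.
by apply: eq_bigr => i _; rewrite scalerA.
Qed.

Lemma inH_sum p (c : 'I_p -> int) (bs : 'I_p -> 'rV[int]_(nreg G)) :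
  (forall l, inH (bs l)) -> inH (\sum_l c l *: bs l).
Proof.
move=> Hbs; apply: (big_ind (@inH G)); [exact: inH0 | exact: inHD |].
by move=> l _; apply: inHZ.
Qed.

End IntegralClosure.

Lemma inH_RN (R : realType) (G : curve_data) (x : 'rV[R]_(nreg G)) :
  inH_R x -> inH_R (- x).
Proof.
move=> [p [bs [r [Hbs ->]]]]; exists p, bs, (fun l => - r l); split => //.
by rewrite -sumrN; apply: eq_bigr => l _; rewrite scaleNr.
Qed.

Lemma sgr_eq_of_dist_lt (R : realDomainType) (x y : R) :
  `|x - y| < `|x| -> Num.sg y = Num.sg x.
Proof.
rewrite ltr_distlC => /andP[lo hi].
case: (ltgtP x 0) => [xn|xp|x0].
- by rewrite !ltr0_sg //; move: hi; rewrite ltr0_norm //; lra.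
- by rewrite !gtr0_sg //; move: lo; rewrite gtr0_norm //; lra.
- by move: lo hi; rewrite x0 normr0; lra.
Qed.

Lemma rat_approx_row (R : realType) k (u : 'rV[R]_k) (d : R) : 0 < d ->
  exists uq : 'rV[rat]_k, forall i, `|u 0 i - ratr (uq 0 i)| < d.
Proof.
move=> d0.
suff /fin_all_exists[f Hf] : forall i, exists q : rat, `|u 0 i - ratr q| < d.
  by exists (\row_i f i) => i; rewrite mxE.
move=> i; have [|q] := @rat_in_itvoo R (u 0 i - d) (u 0 i + d); first by lra.
by rewrite in_itv /= -ltr_distlC; exists q.
Qed.

Lemma rat_approx_mulmx (R : realType) k n (M : 'M[R]_(k, n)) (u : 'rV[R]_k) (e : R) :
  0 < e -> exists uq : 'rV[rat]_k,
    forall j, `|(u *m M) 0 j - (map_mx ratr uq *m M) 0 j| < e.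
Proof.
move=> e0; pose S := 1 + \sum_i \sum_j `|M i j|.
have sumS j : \sum_i `|M i j| < S.
  rewrite /S ltr_pwDl // ler_sum // => i _.
  by rewrite (bigD1 j) //= lerDl sumr_ge0.
have S0 : 0 < S by rewrite /S ltr_pwDl // !sumr_ge0 // => i _; rewrite sumr_ge0.
have [uq Huq] := rat_approx_row u (divr_gt0 e0 S0).
exists uq => j.
have -> : (u *m M) 0 j - (map_mx ratr uq *m M) 0 j = ((u - map_mx ratr uq) *m M) 0 j.
  by rewrite mulmxBl !mxE.
rewrite mxE.
apply: le_lt_trans (ler_norm_sum _ _ _) _.
apply: (@le_lt_trans _ _ (\sum_i e / S * `|M i j|)).
  by apply: ler_sum => i _; rewrite !mxE normrM ler_wpM2r // ltW.
by rewrite -mulr_sumr mulrAC ltr_pdivrMr // ltr_pM2l.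
Qed.

Lemma rat_point_same_sign (R : realType) p n (W : 'M[rat]_(p, n)) (r : 'rV[R]_p) :
  exists q : 'rV[rat]_p, forall j,
    Num.sg (ratr ((q *m W) 0 j) : R) = Num.sg ((r *m map_mx ratr W) 0 j).
Proof.
move Ex : (r *m _) => x.
pose A : 'M[rat]_(p, n) := \matrix_(l, j) if x 0 j == 0 then W l j else 0.
have [u rE] : exists u, r = u *m map_mx ratr (kermx A).
  (* the real kernel of a rational matrix is spanned by its rational kernel *)
  apply/submxP; rewrite map_kermx; apply/sub_kermxP/rowP => j; rewrite !mxE.
  have [xj0|xj_neq0] := eqVneq (x 0 j) 0; last first.
    by rewrite big1 // => l _; rewrite !mxE (negbTE xj_neq0) rmorph0 mulr0.
  by rewrite -[RHS]xj0 -Ex mxE; apply: eq_bigr => l _; rewrite !mxE xj0 eqxx.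
have xE : x = u *m map_mx ratr (kermx A *m W).
  by rewrite -Ex rE -mulmxA -map_mxM.
pose e := \big[Order.min/1]_(j | x 0 j != 0) `|x 0 j|.
have e0 : 0 < e by apply: lt_bigmin => // j; rewrite normr_gt0.
have [uq Huq] := rat_approx_mulmx (map_mx ratr (kermx A *m W)) u e0.
exists (uq *m kermx A) => j.
have [xj0|xj_neq0] := eqVneq (x 0 j) 0.
  suff -> : (uq *m kermx A *m W) 0 j = 0 by rewrite xj0 rmorph0.
  have <- : (uq *m kermx A *m A) 0 j = 0 by rewrite -mulmxA mulmx_ker mulmx0 mxE.
  by rewrite !mxE; apply: eq_bigr => l _; rewrite !mxE xj0 eqxx.
have e_le : e <= `|x 0 j| by exact: bigmin_le_cond.
apply/sgr_eq_of_dist_lt/(lt_le_trans _ e_le).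
by move: (Huq j); rewrite -xE -map_mxM mulmxA [X in _ - X]mxE.
Qed.

Lemma common_denominator (I : finType) (q : I -> rat) :
  exists2 D : int, 0 < D & exists c : I -> int, forall l, (c l)%:~R = q l * D%:~R.
Proof.
exists (\prod_k denq (q k)); first by rewrite prodr_gt0 // => k _; exact: denq_gt0.
exists (fun l => numq (q l) * \prod_(k | k != l) denq (q k)) => l.
rewrite [in RHS](bigD1 l) //= !intrM -{2}[q l]divq_num_den mulrA divfK //.
by rewrite intr_eq0 denq_neq0.
Qed.

Definition rows_ratmx p n (bs : 'I_p -> 'rV[int]_n) : 'M[rat]_(p, n) :=
  \matrix_(l, j) (bs l 0 j)%:~R.

Lemma sum_scale_rows (R : realType) p n (bs : 'I_p -> 'rV[int]_n) (r : 'I_p -> R) :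
  \sum_l r l *: map_mx (fun z : int => z%:~R) (bs l)
  = \row_l r l *m map_mx ratr (rows_ratmx bs).
Proof.
apply/rowP => j; rewrite summxE !mxE; apply: eq_bigr => l _.
by rewrite !mxE ratr_int.
Qed.

Lemma clear_denominators p n (bs : 'I_p -> 'rV[int]_n) (q : 'rV[rat]_p) :
  exists2 D : int, 0 < D & exists c : 'I_p -> int, forall j,
    ((\sum_l c l *: bs l) 0 j)%:~R = D%:~R * (q *m rows_ratmx bs) 0 j.
Proof.
have [D D_gt0 [c cE]] := common_denominator (fun l => q 0 l).
exists D => //; exists c => j.
rewrite summxE rmorph_sum !mxE mulr_sumr; apply: eq_bigr => l _.
by rewrite !mxE rmorphM /= cE mulrAC mulrC.
Qed.

Lemma inH_R_nonneg_eq0 (R : realType) (G : curve_data) (x : 'rV[R]_(nreg G)) :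
  admissible G -> inH_R x -> (forall j, 0 <= x 0 j) -> x = 0.
Proof.
move=> adm [p [bs [r [Hbs ->]]]]; rewrite sum_scale_rows => x_ge0.
have [q sg_q] := rat_point_same_sign (rows_ratmx bs) (\row_l r l).
have [D D_gt0 [c bE]] := clear_denominators bs q.
set b := \sum_l c l *: bs l in bE.
have b_ge0 j : 0 <= b 0 j.
  rewrite -(ler0z rat) bE pmulr_rge0 ?ltr0z // -(ler_rat R) rmorph0.
  by rewrite -sgr_ge0 sg_q sgr_ge0.
have b0 : b = 0.
  apply/eqP; apply: contraT => b_neq0.
  have [_ [j b_lt0]] := adm b (inH_sum c Hbs) b_neq0.
  by move: (b_ge0 j); rewrite leNgt b_lt0.
apply/rowP => j; apply/eqP; rewrite [X in _ == X]mxE -sgr_eq0 -sg_q sgr_eq0.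
move: (bE j); rewrite b0 mxE /= => /esym/eqP.
by rewrite mulf_eq0 intr_eq0 gt_eqF //= => /eqP->; rewrite rmorph0.
Qed.

Lemma inH_R_neg_coord (R : realType) (G : curve_data) (x : 'rV[R]_(nreg G)) :
  admissible G -> inH_R x -> x != 0 -> exists j, x 0 j < 0.
Proof.
move=> adm xH x_neq0; have [/existsP //|/existsPn x_ge0] := boolP [exists j, x 0 j < 0].
by move: x_neq0; rewrite (inH_R_nonneg_eq0 adm xH) ?eqxx // => j; rewrite leNgt x_ge0.
Qed.

Theorem lemma3p3 (R : realType) (G : curve_data) :
  admissible G ->
  forall x : 'rV[R]_(nreg G), inH_R x -> x != 0 ->
    (exists j, 0 < x 0 j) /\ (exists j, x 0 j < 0).
Proof.
move=> adm x xH x_neq0; split; last exact: inH_R_neg_coord.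
have [|j] := inH_R_neg_coord adm (inH_RN xH); first by rewrite oppr_eq0.
by rewrite mxE oppr_lt0; exists j.
Qed.
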